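(* Let $p$ be an odd prime. Then \[\sum_{i=1}^{(p-1)/2}\left(S_{2i}^*-S_{2i-1}^*\right)\equiv -1\pmod p.\]
   Context: For $u\in\mathbb{F}_p$ and $0\le\ell<p$, $S_\ell^*(u)=\{S\subseteq\mathbb{F}_p^* \mid \#S=\ell,\ \sum_{s\in S}s=u\}$, where $\mathbb{F}_p^*=\mathbb{F}_p\setminus\{0\}$ and sums are in $\mathbb{F}_p$. The cardinality $\#S_\ell^*(u)$ does not depend on $u\in\mathbb{F}_p^*$; this common integer value is denoted $S_\ell^*$. *)

From mathcomp Require Import all_boot all_order all_algebra.
Unset Printing Implicit Defensive.
Import GRing.Theory.
Local Open Scope ring_scope.

Definition Sstar_set (p : nat) (l : nat) (u : 'F_p) : {set {set 'F_p}} :=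
  [set S : {set 'F_p} | [&& (0 : 'F_p) \notin S, (#|S| == l)%N & (\sum_(s in S) s) == u]].

Definition Sstar_card (p : nat) (l : nat) (u : 'F_p) : nat := #|Sstar_set p l u|.

(* S_l^* : the common value of #S_l^*(u) for u in F_p^*; we take u = 1. *)
Definition Sstar (p : nat) (l : nat) : nat := Sstar_card p l 1.

From mathcomp Require Import all_boot all_order all_algebra zify.
Import GRing.Theory.
Local Open Scope ring_scope.

(* Translating an l-subset of F_p by t shifts its sum by l t, and l is
   invertible for 0 < l < p, so the l-subsets are equidistributed among the p
   possible sums: p N_l = C(p, l), where N_l counts those with sum 1.
   Separating the subsets that contain 0 gives N_(l+1) = S*_(l+1) + S*_l, and
   with Pascal's rule an induction yields p S*_l = C(p-1, l) - (-1)^l.  Hence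
   p times the alternating sum of the S*_l over 0 < l < p is
   (1 - 1)^(p-1) - 1 - (p - 1) = -p, so the sum in the statement is exactly -1. *)

Section SubsetSums.
Context {V : finZmodType}.

Definition ksubsets_sum (l : nat) (u : V) : {set {set V}} :=
  [set S : {set V} | (#|S| == l) && (\sum_(s in S) s == u)].

Definition nz_ksubsets_sum (l : nat) (u : V) : {set {set V}} :=
  [set S : {set V} | [&& 0 \notin S, #|S| == l & \sum_(s in S) s == u]].

Lemma leq_card_ksubsets_sum_shift l u t :
  (#|ksubsets_sum l u| <= #|ksubsets_sum l (u + t *+ l)%R|)%N.
Proof.
have shift_inj : injective (+%R^~ t) by exact: addIr.
rewrite -(card_imset _ (imset_inj shift_inj)).
apply/subset_leq_card/subsetP => _ /imsetP [S + ->].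
rewrite !inE => /andP [/eqP cardS /eqP sumS].
rewrite card_imset // cardS eqxx big_imset /=; last by move=> x y _ _ /shift_inj.
by rewrite big_split /= sumr_const sumS cardS.
Qed.

Lemma card_ksubsets_sum_split l u :
  #|ksubsets_sum l.+1 u| = (#|nz_ksubsets_sum l.+1 u| + #|nz_ksubsets_sum l u|)%N.
Proof.
rewrite -(cardsID [set S : {set V} | 0 \notin S]); congr (_ + _)%N.
  by apply: eq_card => S; rewrite !inE andbC.
have -> : ksubsets_sum l.+1 u :\: [set S : {set V} | 0 \notin S] =
          [set 0 |: S | S in nz_ksubsets_sum l u].
  apply/setP => S; rewrite !inE negbK; apply/andP/imsetP.
    case=> S0 /andP [/eqP cardS /eqP sumS]; exists (S :\ 0); last by rewrite setD1K.
    move: cardS sumS; rewrite !inE eqxx (cardsD1 0 S) (big_setD1 0 S0) S0 /=.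
    by rewrite add0r add1n => -[->] ->; rewrite !eqxx.
  case=> T; rewrite inE => /and3P [T0 /eqP cardT /eqP sumT] ->.
  by rewrite setU11 cardsU1 T0 cardT big_setU1 //= add0r sumT !eqxx.
apply: card_in_imset => A B; rewrite !inE => /andP [A0 _] /andP [B0 _] eqAB.
by rewrite -(setU1K A0) eqAB setU1K.
Qed.

End SubsetSums.

Section FieldSubsetSums.
Context {F : finFieldType}.

Lemma card_ksubsets_sum_const l (u v : F) : l%:R != 0 :> F ->
  #|ksubsets_sum l u| = #|ksubsets_sum l v|.
Proof.
have shift_to (a b : F) :
    l%:R != 0 :> F -> (#|ksubsets_sum l a| <= #|ksubsets_sum l b|)%N.
  move=> l_nz; have := leq_card_ksubsets_sum_shift l a ((b - a) / l%:R).
  by rewrite -[_ *+ l]mulr_natr divfK // addrC subrK.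
by move=> l_nz; apply/eqP; rewrite eqn_leq !shift_to.
Qed.

Lemma card_ksubsets_sum l (u : F) : l%:R != 0 :> F ->
  (#|F| * #|ksubsets_sum l u|)%N = 'C(#|F|, l).
Proof.
move=> l_nz; rewrite -card_draws -[RHS]sum1_card -sum_nat_const.
rewrite [RHS](partition_big (fun S : {set F} => \sum_(s in S) s) predT) //=.
apply: eq_bigr => v _; rewrite (card_ksubsets_sum_const _ u v l_nz) -sum1_card.
by apply: eq_bigl => S; rewrite !inE.
Qed.

End FieldSubsetSums.

Lemma sum_signr_binomial (R : pzRingType) n : (0 < n)%N ->
  \sum_(i < n.+1) (-1) ^+ i *+ 'C(n, i) = 0 :> R.
Proof. by move=> n_gt0; rewrite -exprD1n addNr expr0n gtn_eqF. Qed.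

Lemma sum_even_sub_odd (R : pzRingType) (F : nat -> R) h :
  \sum_(1 <= i < h.+1) (F (2 * i)%N - F (2 * i - 1)%N) =
  \sum_(1 <= l < (2 * h).+1) (-1) ^+ l * F l.
Proof.
elim: h => [|h IHh]; first by rewrite !big_geq.
rewrite big_nat_recr //= IHh mulnSr addn2 (big_nat_recr (2 * h).+2) //.
rewrite (big_nat_recr (2 * h).+1) //= subn1 /=.
rewrite -[(-1) ^+ (2 * h).+1]signr_odd -[(-1) ^+ (2 * h).+2]signr_odd /=.
rewrite oddM /= mulN1r mul1r -addrA.
by congr (_ + _); rewrite addrC.
Qed.

Section PrimeField.
Variable p : nat.
Hypothesis p_pr : prime p.

Lemma Sstar_split l : #|ksubsets_sum l.+1 (1 : 'F_p)| = (Sstar p l.+1 + Sstar p l)%N.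
Proof. exact: card_ksubsets_sum_split. Qed.

Lemma Sstar0 : Sstar p 0 = 0%N.
Proof.
apply/eqP; rewrite cards_eq0; apply/eqP/setP => S; rewrite !inE.
by apply/and3P => -[_ /eqP/cards0_eq -> ]; rewrite big_set0 eq_sym oner_eq0.
Qed.

Lemma Fp_natr_neq0 l : (0 < l < p)%N -> l%:R != 0 :> 'F_p.
Proof.
case/andP => l_gt0 l_lt_p; rewrite -(dvdn_pcharf (pchar_Fp p_pr)).
by apply: contraTN l_lt_p => /(dvdn_leq l_gt0); rewrite leqNgt.
Qed.

Lemma Sstar_closed_form l :
  (l < p)%N -> (p * Sstar p l)%:Z = ('C(p.-1, l))%:Z - (-1) ^+ l.
Proof.
elim: l => [|l IHl] l_lt_p; first by rewrite Sstar0 muln0 bin0 subrr.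
have := card_ksubsets_sum l.+1 (1 : 'F_p) (Fp_natr_neq0 l.+1 _).
rewrite card_Fp // l_lt_p Sstar_split => /(_ isT).
have pascal : 'C(p, l.+1) = ('C(p.-1, l.+1) + 'C(p.-1, l))%N.
  by rewrite -binS prednK ?prime_gt0.
rewrite pascal mulnDr; have := IHl (ltnW l_lt_p); rewrite exprS; lia.
Qed.

Lemma sum_signr_Sstar : \sum_(1 <= l < p) (-1) ^+ l * (Sstar p l)%:Z = -1.
Proof.
have p_gt0 := prime_gt0 p_pr.
have binomial : \sum_(0 <= l < p) (-1) ^+ l * ('C(p.-1, l))%:Z = 0.
  rewrite -{1}(prednK p_gt0) big_mkord -[RHS](sum_signr_binomial _ p.-1).
    by apply: eq_bigr => l _; rewrite -natz mulr_natr.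
  by rewrite -ltnS prednK ?prime_gt1.
apply: (@mulfI _ p%:Z); first by rewrite eqz_nat -lt0n.
rewrite mulr_sumr mulrN1.
transitivity (\sum_(1 <= l < p) ((-1) ^+ l * ('C(p.-1, l))%:Z - 1)).
  rewrite big_nat [RHS]big_nat; apply: eq_bigr => l /andP [_ l_lt_p].
  by rewrite mulrCA -PoszM Sstar_closed_form // mulrBr -expr2 sqrr_sign.
rewrite sumrB sumr_const_nat.
move: binomial; rewrite big_ltn // expr0 mul1r bin0 => binomial.
have -> : \sum_(1 <= l < p) (-1) ^+ l * ('C(p.-1, l))%:Z = -1.
  by apply: (@addrI _ 1); rewrite binomial addrN.
by rewrite natz; lia.
Qed.

End PrimeField.

Theorem proposition6 (p : nat) (hp : prime p) (hodd : odd p) :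
  (\sum_(1 <= i < (p - 1) %/ 2 + 1)
      ((Sstar p (2 * i))%:Z - (Sstar p (2 * i - 1))%:Z)%R
   = - 1 %[mod p])%Z.
Proof.
have p_eq : p = (2 * ((p - 1) %/ 2)).+1.
  by have := odd_double_half p; rewrite hodd -divn2; lia.
rewrite addn1 (sum_even_sub_odd _ (fun l => (Sstar p l)%:Z)) -p_eq.
by rewrite sum_signr_Sstar.
Qed.
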